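(* Fix $q\ge2$ and $z\in\mathbb Z$, and let $\Delta_n=\log_q n-\lceil\log_q n\rceil$. Then $$\lim_{n\to\infty}\frac{|\mathcal C_1(n,q,\lceil\log_q n\rceil+z)|}{\frac{q^n}{n}\big(\frac{q-1}{q}\big)^2 q^{\,\Delta_n-z-(\log_q e)(q-1)q^{\Delta_n-z-1}}}=1.$$
   Context: $\Sigma_q=\{0,\dots,q-1\}$. For integers $1\le k<n$, $\mathcal C_1(n,q,k)$ is the set of $\vec a\in\Sigma_q^n$ such that $a_1=\dots=a_k=0$, $a_{k+1}\ne0$, $a_n\ne0$, and $(a_{k+2},\dots,a_{n-1})$ contains no run of $k$ consecutive zeros. *)

From Stdlib Require Import Reals Lia ZArith Arith List.
Import ListNotations.
Open Scope R_scope.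

Fixpoint all_words (q n : nat) : list (list nat) :=
  match n with
  | O => [ [] ]
  | S m => flat_map (fun w => map (fun a => a :: w) (seq 0 q)) (all_words q m)
  end.

(* l contains a run of k consecutive zeros (positions i, ..., i+k-1, all
   inside l).  Out-of-range positions read as the nonzero default 1. *)
Definition has_zero_run (k : nat) (l : list nat) : bool :=
  existsb (fun i => forallb (fun j => Nat.eqb (nth (i + j) l 1%nat) 0) (seq 0 k))
          (seq 0 (S (length l))).

(* Membership in C_1(n,q,k) for a word a of length n (0-based positions):
   a_1..a_k = 0, a_{k+1} <> 0, a_n <> 0, and (a_{k+2},...,a_{n-1}) has no
   run of k consecutive zeros. *)
Definition inC1 (n k : nat) (a : list nat) : bool :=
  forallb (fun i => Nat.eqb (nth i a 0%nat) 0) (seq 0 k)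
  && negb (Nat.eqb (nth k a 0%nat) 0)
  && negb (Nat.eqb (nth (n - 1) a 0%nat) 0)
  && negb (has_zero_run k (firstn (n - k - 2) (skipn (k + 1) a))).

Definition card_C1 (n q k : nat) : nat :=
  length (filter (inC1 n k) (all_words q n)).

Definition logq (q x : R) : R := ln x / ln q.

(* ceiling: floor x = up x - 1, so ceil x = - floor (- x) = 1 - up (- x) *)
Definition Rceil (x : R) : Z := (1 - up (- x))%Z.

Definition Delta (q n : nat) : R := logq (INR q) (INR n) - IZR (Rceil (logq (INR q) (INR n))).

(* k_n = ceil(log_q n) + z, as a natural number (positive for large n) *)
Definition kn (q n : nat) (z : Z) : nat := Z.to_nat (Rceil (logq (INR q) (INR n)) + z).

Definition main_term (q n : nat) (z : Z) : R :=
  let Q := INR q in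
  let D := Delta q n in
  (Q ^ n / INR n) * ((Q - 1) / Q) ^ 2 *
  Rpower Q (D - IZR z - (logq Q (exp 1)) * (Q - 1) * Rpower Q (D - IZR z - 1)).

(* A word of C_1(n, q, k) is 0^k x r with x <> 0, where r has length n - k - 1, a nonzero
   last letter, and no run of k zeros among its first m = n - k - 2 letters.  Hence
   |C_1| = (q - 1)^2 A_m, where A_m counts the q-ary words of length m without k consecutive
   zeros.  Classifying those words by their number i < k of leading zeros gives, for m >= k,
   A_m = (q - 1) (A_{m-1} + ... + A_{m-k}), whence A_{m+1} = q A_m - (q - 1) A_{m-k}: the
   normalised P_m = A_m / q^m satisfies P_{m+1} = P_m - eps P_{m-k} with
   eps = (q - 1) / q^(k+1).  As P loses at most a factor 1 - 2 eps per step,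
   P_{m-k} = P_m (1 + O(k eps)), so P_{k+t} = exp (- eps t (1 + O(k eps))).  For
   k = ceil (log_q n) + z the product eps n stays bounded and k eps = O(log n / n), while
   eps n is exactly the exponent in the main term; so the ratio tends to 1. *)

From Pilot Require Import Defs.
From Stdlib Require Import Reals ZArith Lia Lra List Bool.
From Coquelicot Require Import Coquelicot.
Import ListNotations.
Open Scope nat_scope.

(** * Counting words *)

Definition count_words (q n : nat) (P : list nat -> bool) : nat :=
  length (filter P (all_words q n)).

Lemma all_words_length q n w : In w (all_words q n) -> length w = n.
Proof.
  revert w; induction n as [|n IH]; simpl; intros w Hw.
  - destruct Hw as [<-|[]]; reflexivity.
  - apply in_flat_map in Hw as [w' [Hw' Hin]].
    apply in_map_iff in Hin as [a [<- _]]. simpl; f_equal; auto.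
Qed.

Lemma count_words_ext q n P P' :
  (forall w, length w = n -> P w = P' w) -> count_words q n P = count_words q n P'.
Proof.
  intros H. unfold count_words. f_equal.
  apply filter_ext_in. intros w Hw. apply H. exact (all_words_length q n w Hw).
Qed.

Lemma count_words_false q n : count_words q n (fun _ => false) = 0.
Proof. unfold count_words. induction (all_words q n); auto. Qed.

Lemma count_words_nil q P : count_words q 0 P = if P [] then 1 else 0.
Proof. unfold count_words; simpl. destruct (P []); reflexivity. Qed.

Lemma length_filter_indicator {A : Type} (P : A -> bool) l :
  length (filter P l) = list_sum (map (fun x => if P x then 1 else 0) l).
Proof. induction l as [|a l IH]; simpl; [reflexivity|]. destruct (P a); simpl; lia. Qed.

Lemma list_sum_map_add {A : Type} (f g : A -> nat) l :
  list_sum (map (fun a => f a + g a) l) = list_sum (map f l) + list_sum (map g l).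
Proof. induction l; simpl; lia. Qed.

Lemma list_sum_map_const {A : Type} (c : nat) (l : list A) :
  list_sum (map (fun _ => c) l) = length l * c.
Proof. induction l; simpl; lia. Qed.

Lemma list_sum_map_mul_r {A : Type} (f : A -> nat) c l :
  list_sum (map (fun a => f a * c) l) = list_sum (map f l) * c.
Proof. induction l; simpl; lia. Qed.

Lemma list_sum_map_swap {A B : Type} (h : A -> B -> nat) (l1 : list A) (l2 : list B) :
  list_sum (map (fun b => list_sum (map (fun a => h a b) l1)) l2) =
  list_sum (map (fun a => list_sum (map (fun b => h a b) l2)) l1).
Proof.
  induction l2; simpl.
  - rewrite list_sum_map_const. lia.
  - rewrite list_sum_map_add, IHl2. reflexivity.
Qed.

Lemma length_filter_flat_map {A B : Type} (P : B -> bool) (g : A -> list B) l :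
  length (filter P (flat_map g l)) = list_sum (map (fun x => length (filter P (g x))) l).
Proof. induction l; simpl; [reflexivity|]. rewrite filter_app, length_app, IHl. reflexivity. Qed.

Lemma count_words_S q n P :
  count_words q (S n) P =
  list_sum (map (fun a => count_words q n (fun w => P (a :: w))) (seq 0 q)).
Proof.
  unfold count_words; simpl. rewrite length_filter_flat_map.
  rewrite (map_ext _ (fun w => list_sum (map (fun a => if P (a :: w) then 1 else 0) (seq 0 q)))).
  2:{ intros w. rewrite filter_map_swap, length_map, length_filter_indicator. reflexivity. }
  rewrite (list_sum_map_swap (fun a w => if P (a :: w) then 1 else 0)).
  apply f_equal, map_ext; intros a. rewrite length_filter_indicator. reflexivity.
Qed.

Lemma count_words_S_split q n P c : 1 <= q ->
  (forall a, 1 <= a -> count_words q n (fun w => P (a :: w)) = c) ->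
  count_words q (S n) P = count_words q n (fun w => P (0 :: w)) + (q - 1) * c.
Proof.
  intros Hq Hc. rewrite count_words_S. destruct q as [|q]; [lia|]. simpl.
  rewrite (map_ext_in _ (fun _ => c)).
  2:{ intros a Ha. apply in_seq in Ha. apply Hc. lia. }
  rewrite list_sum_map_const, length_seq. lia.
Qed.

Lemma count_words_snoc q m P (Q : nat -> bool) :
  count_words q (S m) (fun r => P (firstn m r) && Q (nth m r 0)) =
  count_words q m P * length (filter Q (seq 0 q)).
Proof.
  revert P; induction m as [|m IH]; intros P; rewrite count_words_S.
  - rewrite count_words_nil, length_filter_indicator.
    rewrite (map_ext _ (fun a => if P [] && Q a then 1 else 0))
      by (intros a; apply count_words_nil).
    destruct (P []); simpl.
    + lia.
    + rewrite list_sum_map_const. lia.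
  - rewrite count_words_S, <- list_sum_map_mul_r. apply f_equal, map_ext. intros a.
    rewrite <- (IH (fun u => P (a :: u))). reflexivity.
Qed.

(** * Words without [k] consecutive zeros *)

Lemma has_zero_run_spec k l : has_zero_run k l = true <->
  exists i, (i <= length l) /\ forall j, j < k -> nth (i + j) l 1 = 0.
Proof.
  unfold has_zero_run. rewrite existsb_exists. split.
  - intros [i [Hi Hf]]. apply in_seq in Hi. rewrite forallb_forall in Hf.
    exists i; split; [lia|]. intros j Hj. apply Nat.eqb_eq, Hf, in_seq; lia.
  - intros [i [Hi Hf]]. exists i; split; [apply in_seq; lia|].
    apply forallb_forall. intros j Hj. apply in_seq in Hj. apply Nat.eqb_eq, Hf; lia.
Qed.

Lemma repeat_app_cons (x : nat) c l : repeat x c ++ x :: l = repeat x (S c) ++ l.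
Proof. induction c as [|c IH]; simpl; [reflexivity|]. rewrite IH. reflexivity. Qed.

Lemma has_zero_run_long k c l : 1 <= k -> k <= c ->
  has_zero_run k (repeat 0 c ++ l) = true.
Proof.
  intros Hk Hc. apply has_zero_run_spec. exists 0. split; [lia|].
  intros j Hj. rewrite app_nth1 by (rewrite repeat_length; lia). apply nth_repeat_lt; lia.
Qed.

Lemma has_zero_run_short k c : c < k -> has_zero_run k (repeat 0 c) = false.
Proof.
  intros Hc. apply not_true_iff_false. rewrite has_zero_run_spec. intros [i [Hi H]].
  rewrite repeat_length in Hi. specialize (H (c - i) ltac:(lia)).
  rewrite nth_overflow in H by (rewrite repeat_length; lia). discriminate.
Qed.

Lemma has_zero_run_restart k c a l : c < k -> a <> 0 ->
  has_zero_run k (repeat 0 c ++ a :: l) = has_zero_run k l.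
Proof.
  intros Hc Ha. apply Bool.eq_iff_eq_true; rewrite !has_zero_run_spec.
  rewrite length_app, repeat_length. split.
  - intros [i [Hi H]]. destruct (le_lt_dec i c).
    + specialize (H (c - i) ltac:(lia)). replace (i + (c - i)) with c in H by lia.
      rewrite app_nth2, repeat_length, Nat.sub_diag in H by (rewrite repeat_length; lia).
      contradiction.
    + exists (i - S c). split; [simpl in Hi; lia|]. intros j Hj.
      specialize (H j Hj). rewrite app_nth2, repeat_length in H by (rewrite repeat_length; lia).
      replace (i + j - c) with (S (i - S c + j)) in H by lia. exact H.
  - intros [i [Hi H]]. exists (S c + i). split; [simpl; lia|]. intros j Hj.
    rewrite app_nth2, repeat_length by (rewrite repeat_length; lia).
    replace (S c + i + j - c) with (S (i + j)) by lia. apply H, Hj.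
Qed.

Fixpoint runfree (k q m c : nat) : nat :=
  match m with
  | O => if c <? k then 1 else 0
  | S m' => if c <? k then runfree k q m' (S c) + (q - 1) * runfree k q m' 0 else 0
  end.

Lemma count_runfree k q m c : 1 <= q -> 1 <= k ->
  count_words q m (fun u => negb (has_zero_run k (repeat 0 c ++ u))) = runfree k q m c.
Proof.
  intros Hq Hk. revert c; induction m as [|m IH]; intros c.
  - rewrite count_words_nil, app_nil_r. simpl. destruct (Nat.ltb_spec c k).
    + rewrite has_zero_run_short; auto.
    + rewrite <- (app_nil_r (repeat 0 c)), has_zero_run_long; auto.
  - simpl runfree. destruct (Nat.ltb_spec c k) as [Hc|Hc].
    + rewrite (count_words_S_split _ _ _ (runfree k q m 0) Hq).
      * rewrite <- (IH (S c)). f_equal. apply count_words_ext. intros w _.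
        rewrite repeat_app_cons. reflexivity.
      * intros a Ha. rewrite <- (IH 0). apply count_words_ext. intros w _.
        rewrite has_zero_run_restart by lia. reflexivity.
    + transitivity (count_words q (S m) (fun _ => false)); [|apply count_words_false].
      apply count_words_ext. intros w _. rewrite has_zero_run_long; auto.
Qed.

Lemma runfree_full k q m c : k <= c -> runfree k q m c = 0.
Proof. intros H. destruct m; simpl; rewrite (proj2 (Nat.ltb_ge _ _) H); reflexivity. Qed.

Lemma runfree_short k q m c : 1 <= q -> m + c < k -> runfree k q m c = q ^ m.
Proof.
  intros Hq. revert c; induction m as [|m IH]; intros c H; simpl;
    rewrite (proj2 (Nat.ltb_lt _ _)) by lia; [reflexivity|].
  rewrite !IH by lia. destruct q; [lia|]. simpl. lia.
Qed.

Lemma runfree_edge k q m c : 1 <= q -> m + c = k -> runfree k q m c = q ^ m - 1.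
Proof.
  intros Hq. revert c; induction m as [|m IH]; intros c H; simpl.
  - rewrite (proj2 (Nat.ltb_ge _ _)) by lia. reflexivity.
  - rewrite (proj2 (Nat.ltb_lt _ _)) by lia. rewrite IH, runfree_short by lia.
    assert (1 <= q ^ m) by (apply Nat.neq_0_lt_0, Nat.pow_nonzero; lia).
    destruct q; [lia|]. simpl. nia.
Qed.

Lemma list_sum_seq_S_l (f : nat -> nat) d :
  list_sum (map f (seq 0 (S d))) = f 0 + list_sum (map (fun i => f (S i)) (seq 0 d)).
Proof. simpl. rewrite <- seq_shift, map_map. reflexivity. Qed.

Lemma list_sum_seq_S_r (f : nat -> nat) d :
  list_sum (map f (seq 0 (S d))) = list_sum (map f (seq 0 d)) + f d.
Proof. rewrite seq_S, map_app, list_sum_app. simpl. lia. Qed.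

Lemma runfree_unroll k q d m c : d + c = k -> d <= m ->
  runfree k q m c = (q - 1) * list_sum (map (fun i => runfree k q (m - 1 - i) 0) (seq 0 d)).
Proof.
  revert m c; induction d as [|d IH]; intros m c Hd Hm.
  - rewrite runfree_full by lia. simpl. lia.
  - destruct m as [|m]; [lia|]. simpl runfree. rewrite (proj2 (Nat.ltb_lt _ _)) by lia.
    rewrite IH by lia. rewrite list_sum_seq_S_l.
    rewrite (map_ext (fun i => runfree k q (S m - 1 - S i) 0) (fun i => runfree k q (m - 1 - i) 0))
      by (intros i; f_equal; lia).
    rewrite !Nat.sub_0_r. lia.
Qed.

Lemma runfree_rec k q m : 1 <= q -> 1 <= k -> k <= m ->
  runfree k q (S m) 0 + (q - 1) * runfree k q (m - k) 0 = q * runfree k q m 0.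
Proof.
  intros Hq Hk Hm.
  rewrite (runfree_unroll k q k (S m) 0) by lia.
  pose proof (runfree_unroll k q k m 0 ltac:(lia) Hm) as Em.
  destruct k as [|k]; [lia|].
  rewrite list_sum_seq_S_l, Nat.sub_0_r. rewrite list_sum_seq_S_r in Em.
  replace (m - 1 - k) with (m - S k) in Em by lia.
  rewrite (map_ext (fun i => runfree (S k) q (S m - 1 - S i) 0) (fun i => runfree (S k) q (m - 1 - i) 0))
    by (intros i; f_equal; lia).
  replace (S m - 1) with m by lia.
  revert Em. generalize (list_sum (map (fun i => runfree (S k) q (m - 1 - i) 0) (seq 0 k))).
  intros X Em. rewrite Em at 2. destruct q as [|q]; [lia|]. simpl. nia.
Qed.

(** * The count of [C_1(n, q, k)] *)

Lemma inC1_early_nonzero n k j a w : j < k -> a <> 0 ->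
  inC1 n k (repeat 0 j ++ a :: w) = false.
Proof.
  intros Hj Ha. unfold inC1.
  replace (forallb _ (seq 0 k)) with false; [reflexivity|].
  symmetry. apply not_true_iff_false. rewrite forallb_forall. intros H.
  specialize (H j ltac:(apply in_seq; lia)).
  rewrite app_nth2, repeat_length, Nat.sub_diag in H by (rewrite repeat_length; lia).
  apply Nat.eqb_eq in H. contradiction.
Qed.

Lemma inC1_late_zero n k w : inC1 n k (repeat 0 k ++ 0 :: w) = false.
Proof.
  unfold inC1. rewrite app_nth2, repeat_length, Nat.sub_diag by (rewrite repeat_length; lia).
  simpl. rewrite !andb_false_r. reflexivity.
Qed.

Lemma inC1_shape k m x r : 1 <= k -> x <> 0 -> length r = S m ->
  inC1 (k + 2 + m) k (repeat 0 k ++ x :: r) =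
  negb (has_zero_run k (firstn m r)) && negb (nth m r 0 =? 0).
Proof.
  intros Hk Hx Hr. unfold inC1.
  replace (forallb _ (seq 0 k)) with true.
  2:{ symmetry. apply forallb_forall. intros i Hi. apply in_seq in Hi.
      rewrite app_nth1, nth_repeat_lt by (rewrite ?repeat_length; lia). reflexivity. }
  rewrite app_nth2, repeat_length, Nat.sub_diag by (rewrite repeat_length; lia).
  rewrite app_nth2, repeat_length by (rewrite repeat_length; lia).
  replace (k + 2 + m - 1 - k) with (S m) by lia.
  rewrite skipn_app, repeat_length, skipn_all2 by (rewrite repeat_length; lia).
  replace (k + 1 - k) with 1 by lia. replace (k + 2 + m - k - 2) with m by lia.
  apply Nat.eqb_neq in Hx. simpl nth. rewrite Hx. simpl. apply andb_comm.
Qed.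

Lemma card_C1_zero_prefix n q k j : 1 <= q -> j <= k -> k < n ->
  card_C1 n q k = count_words q (n - j) (fun w => inC1 n k (repeat 0 j ++ w)).
Proof.
  intros Hq. induction j as [|j IH]; intros Hj Hn.
  - rewrite Nat.sub_0_r. reflexivity.
  - rewrite IH by lia. replace (n - j) with (S (n - S j)) by lia.
    rewrite (count_words_S_split _ _ _ 0 Hq).
    + rewrite Nat.mul_0_r, Nat.add_0_r. apply count_words_ext. intros w _.
      rewrite repeat_app_cons. reflexivity.
    + intros a Ha. transitivity (count_words q (n - S j) (fun _ => false));
        [|apply count_words_false].
      apply count_words_ext. intros w _. apply inC1_early_nonzero; lia.
Qed.

Lemma length_filter_nonzero q : 1 <= q ->
  length (filter (fun a => negb (a =? 0)) (seq 0 q)) = q - 1.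
Proof.
  intros Hq. destruct q as [|q]; [lia|]. simpl. rewrite <- seq_shift, filter_map_swap.
  rewrite length_map. change (fun a => negb (S a =? 0)) with (fun _ : nat => true).
  rewrite List.filter_true, length_seq. lia.
Qed.

Lemma card_C1_eq q k m : 1 <= q -> 1 <= k ->
  card_C1 (k + 2 + m) q k = (q - 1) * ((q - 1) * runfree k q m 0).
Proof.
  intros Hq Hk. rewrite (card_C1_zero_prefix _ q k k Hq (le_n k)) by lia.
  replace (k + 2 + m - k) with (S (S m)) by lia.
  rewrite (count_words_S_split _ _ _ ((q - 1) * runfree k q m 0) Hq).
  - replace (count_words q (S m) _) with 0; [lia|].
    symmetry. transitivity (count_words q (S m) (fun _ => false)); [|apply count_words_false].
    apply count_words_ext. intros w _. apply inC1_late_zero.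
  - intros a Ha.
    transitivity (count_words q (S m) (fun r =>
      negb (has_zero_run k (repeat 0 0 ++ firstn m r)) && negb (nth m r 0 =? 0))).
    + apply count_words_ext. intros r Hr. apply inC1_shape; auto; lia.
    + rewrite (count_words_snoc q m (fun u => negb (has_zero_run k (repeat 0 0 ++ u)))
                 (fun a => negb (a =? 0))).
      rewrite count_runfree, length_filter_nonzero by auto. lia.
Qed.

Open Scope R_scope.

(** * A delayed linear recurrence *)

Lemma geometric_sandwich (u : nat -> R) (a b : R) i t : 0 <= a -> 0 <= b ->
  (forall j, (i <= j < i + t)%nat -> a * u j <= u (S j) <= b * u j) ->
  a ^ t * u i <= u (i + t)%nat <= b ^ t * u i.
Proof.
  intros Ha Hb H. induction t as [|t IH].
  - rewrite Nat.add_0_r. simpl. lra.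
  - destruct IH as [IHl IHu]; [intros j Hj; apply H; lia|].
    destruct (H (i + t)%nat ltac:(lia)) as [Hl Hu].
    rewrite Nat.add_succ_r. simpl. split; nra.
Qed.

Lemma bernoulli_pow x n : 0 <= x <= 1 -> 1 - INR n * x <= (1 - x) ^ n.
Proof.
  intros Hx. induction n as [|n IH]; [simpl; lra|].
  rewrite S_INR, <- tech_pow_Rmult. pose proof (pos_INR n). nra.
Qed.

Lemma exp_pow_INR x n : exp x ^ n = exp (x * INR n).
Proof.
  induction n as [|n IH]; simpl; [rewrite Rmult_0_r, exp_0; reflexivity|].
  rewrite IH, <- exp_plus. f_equal. destruct n; simpl; ring.
Qed.

Lemma exp_le_compat x y : x <= y -> exp x <= exp y.
Proof. intros [H|H]; [left; apply exp_increasing, H | right; rewrite H; reflexivity]. Qed.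

Lemma exp_neg_ratio_le x : 0 <= x < 1 -> exp (- (x / (1 - x))) <= 1 - x.
Proof.
  intros Hx. pose proof (exp_ineq1_le (x / (1 - x))) as E.
  replace (1 + x / (1 - x)) with (/ (1 - x)) in E by (field; lra).
  apply Rinv_le_contravar in E; [|apply Rinv_0_lt_compat; lra].
  rewrite Rinv_inv in E. rewrite exp_Ropp. exact E.
Qed.

Section DelayedRecurrence.
Variables (k : nat) (P : nat -> R) (eps : R).
Hypotheses (k_pos : (1 <= k)%nat) (eps_pos : 0 < eps)
  (eps_small : (2 * INR k + 1) * eps <= 1 / 4)
  (P_init : forall j, (j < k)%nat -> P j = 1) (P_k : 1 - 2 * eps <= P k <= 1)
  (P_rec : forall j, (k <= j)%nat -> P (S j) = P j - eps * P (j - k)).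

Lemma eps_le : 3 * eps <= 1 / 4.
Proof. pose proof (le_INR 1 k k_pos) as Hk. simpl in Hk. nra. Qed.

Lemma pow_decay_lower : 1 - 2 * INR k * eps <= (1 - 2 * eps) ^ k.
Proof.
  pose proof eps_le. pose proof (pos_INR k). replace (2 * INR k * eps) with (INR k * (2 * eps)) by ring.
  apply bernoulli_pow. nra.
Qed.

Lemma P_window j : (k <= j)%nat ->
  (forall i, (j - k <= i < j)%nat -> (1 - 2 * eps) * P i <= P (S i) <= P i) ->
  (1 - 2 * eps) ^ k * P (j - k) <= P j <= P (j - k).
Proof.
  intros Hj Hsteps. pose proof eps_le.
  destruct (geometric_sandwich P (1 - 2 * eps) 1 (j - k) k) as [Hl Hu]; [lra | lra | |].
  - intros i Hi. rewrite Rmult_1_l. apply Hsteps. lia.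
  - replace (j - k + k)%nat with j in Hl, Hu by lia. rewrite pow1, Rmult_1_l in Hu. lra.
Qed.

Lemma P_step j : 0 < P j /\ (1 - 2 * eps) * P j <= P (S j) <= P j.
Proof.
  pose proof eps_le. pose proof (pos_INR k). pose proof pow_decay_lower.
  induction j as [j IH] using (well_founded_induction lt_wf).
  assert (Pj : 0 < P j).
  { destruct j as [|j]; [rewrite P_init by lia; lra|].
    destruct (IH j ltac:(lia)) as [Pj [Hl _]]. nra. }
  split; [exact Pj|].
  destruct (le_lt_dec k j) as [Hj|Hj].
  - (* across the window [j - k, j] the sequence shrinks by at most (1 - 2 eps)^k >= 1/2 *)
    destruct (P_window j Hj) as [Hl Hu]; [intros i Hi; apply IH; lia|].
    assert (0 < P (j - k)) by (apply (IH (j - k)%nat); lia).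
    assert (P (j - k) <= 2 * P j) by nra.
    rewrite P_rec by exact Hj. nra.
  - rewrite (P_init j Hj). destruct (Nat.eq_dec (S j) k) as [E|E].
    + rewrite E. lra.
    + rewrite P_init by lia. lra.
Qed.

Lemma P_ratio j : (k <= j)%nat ->
  (1 - eps / (1 - 2 * INR k * eps)) * P j <= P (S j) <= (1 - eps) * P j.
Proof.
  intros Hj. pose proof pow_decay_lower.
  destruct (P_window j Hj) as [Hl Hu]; [intros i _; apply P_step|].
  assert (Hpos : 0 < P (j - k)) by apply P_step.
  assert (Hd : 0 < 1 - 2 * INR k * eps) by lra.
  assert (Hlow : eps * P (j - k) <= eps / (1 - 2 * INR k * eps) * P j).
  { apply Rmult_le_reg_l with (1 - 2 * INR k * eps); [exact Hd|].
    replace ((1 - 2 * INR k * eps) * (eps / (1 - 2 * INR k * eps) * P j)) with (eps * P j)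
      by (field; lra).
    assert ((1 - 2 * INR k * eps) * P (j - k) <= P j) by nra.
    nra. }
  rewrite P_rec by exact Hj. nra.
Qed.

Lemma P_geometric_bounds t :
  (1 - 2 * eps) * (1 - eps / (1 - 2 * INR k * eps)) ^ t <= P (k + t) <= (1 - eps) ^ t.
Proof.
  pose proof eps_le. pose proof (pos_INR k).
  assert (Hd : 0 < 1 - 2 * INR k * eps) by lra.
  assert (Hth : eps / (1 - 2 * INR k * eps) <= 1).
  { apply Rmult_le_reg_l with (1 - 2 * INR k * eps); [exact Hd|].
    replace ((1 - 2 * INR k * eps) * (eps / (1 - 2 * INR k * eps))) with eps by (field; lra).
    lra. }
  destruct (geometric_sandwich P (1 - eps / (1 - 2 * INR k * eps)) (1 - eps) k t)
    as [Hl Hu]; [lra | lra | intros j Hj; apply P_ratio; lia |].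
  assert (0 <= (1 - eps / (1 - 2 * INR k * eps)) ^ t) by (apply pow_le; lra).
  assert (0 <= (1 - eps) ^ t) by (apply pow_le; lra).
  split; nra.
Qed.

Theorem P_exp_bounds t :
  (1 - 2 * eps) * exp (- (eps * (1 + 2 * ((2 * INR k + 1) * eps)) * INR t))
  <= P (k + t) <= exp (- (eps * INR t)).
Proof.
  pose proof eps_le. pose proof (pos_INR k).
  destruct (P_geometric_bounds t) as [Hl Hu].
  assert (Hd : 0 < 1 - 2 * INR k * eps) by lra.
  assert (Hth : 0 <= eps / (1 - 2 * INR k * eps) < 1).
  { split; [apply Rlt_le, Rdiv_lt_0_compat; lra|].
    apply Rmult_lt_reg_r with (1 - 2 * INR k * eps); [lra|].
    unfold Rdiv. rewrite Rmult_assoc, Rinv_l; lra. }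
  assert (Hs : 0 <= (2 * INR k + 1) * eps <= 1 / 4) by nra.
  assert (Hq : eps / (1 - 2 * INR k * eps) / (1 - eps / (1 - 2 * INR k * eps))
               = eps / (1 - (2 * INR k + 1) * eps)) by (field; split; lra).
  set (s := (2 * INR k + 1) * eps) in *. set (th := eps / (1 - 2 * INR k * eps)) in *.
  assert (Hrate : th / (1 - th) <= eps * (1 + 2 * s)).
  { rewrite Hq. apply Rmult_le_reg_r with (1 - s); [lra|].
    unfold Rdiv. rewrite Rmult_assoc, Rinv_l by lra.
    assert (0 <= eps * (s * (1 - 2 * s))) by (apply Rmult_le_pos; nra). nra. }
  split.
  - eapply Rle_trans; [|exact Hl]. apply Rmult_le_compat_l; [lra|].
    replace (- (eps * (1 + 2 * s) * INR t)) with (- (eps * (1 + 2 * s)) * INR t) by ring.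
    rewrite <- exp_pow_INR. apply pow_incr. split; [left; apply exp_pos|].
    eapply Rle_trans; [|apply exp_neg_ratio_le; exact Hth].
    apply exp_le_compat. lra.
  - eapply Rle_trans; [exact Hu|].
    replace (- (eps * INR t)) with (- eps * INR t) by ring.
    rewrite <- exp_pow_INR. apply pow_incr.
    pose proof (exp_ineq1_le (- eps)). lra.
Qed.
End DelayedRecurrence.

Definition decay_rate (q k : nat) : R := (INR q - 1) / INR q ^ S k.

Lemma normalized_delay_rec (Q a0 a1 a2 : R) k j : (k <= j)%nat -> 0 < Q ->
  a1 + (Q - 1) * a2 = Q * a0 ->
  a1 / Q ^ S j = a0 / Q ^ j - (Q - 1) / Q ^ S k * (a2 / Q ^ (j - k)).
Proof.
  intros Hj HQ Ha. replace a1 with (Q * a0 - (Q - 1) * a2) by lra.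
  replace j with (k + (j - k))%nat at 1 2 by lia. rewrite <- !tech_pow_Rmult, pow_add.
  assert (0 < Q ^ k) by (apply pow_lt; lra). assert (0 < Q ^ (j - k)) by (apply pow_lt; lra).
  field. lra.
Qed.

Lemma runfree_exp_bounds q k t : (2 <= q)%nat -> (1 <= k)%nat ->
  (2 * INR k + 1) * decay_rate q k <= 1 / 4 ->
  (1 - 2 * decay_rate q k) *
    exp (- (decay_rate q k * (1 + 2 * ((2 * INR k + 1) * decay_rate q k)) * INR t))
  <= INR (runfree k q (k + t) 0) / INR q ^ (k + t)
  <= exp (- (decay_rate q k * INR t)).
Proof.
  intros Hq Hk Hs. assert (HQ : 2 <= INR q) by (apply (le_INR 2); exact Hq).
  assert (HQj : forall j, 0 < INR q ^ j) by (intros j; apply pow_lt; lra).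
  apply (P_exp_bounds k (fun j => INR (runfree k q j 0) / INR q ^ j)); auto.
  - unfold decay_rate. apply Rdiv_lt_0_compat; [lra | apply HQj].
  - intros j Hj. rewrite runfree_short, pow_INR by lia. field. apply pow_nonzero. lra.
  - rewrite runfree_edge, minus_INR, pow_INR by (try apply Nat.neq_0_lt_0, Nat.pow_nonzero; lia).
    unfold decay_rate. simpl INR. rewrite <- tech_pow_Rmult.
    pose proof (HQj k). split.
    + apply Rle_trans with (1 - 1 / INR q ^ k); [|right; field; lra].
      apply Rplus_le_compat_l, Ropp_le_contravar.
      apply Rmult_le_reg_r with (INR q * INR q ^ k); [nra|].
      field_simplify; lra.
    + apply Rle_trans with (1 - 1 / INR q ^ k); [right; field; lra|].
      pose proof (Rdiv_lt_0_compat 1 _ Rlt_0_1 (HQj k)). lra.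
  - intros j Hj. apply normalized_delay_rec; [exact Hj | lra |].
    pose proof (runfree_rec k q j ltac:(lia) Hk Hj) as R.
    apply (f_equal INR) in R. rewrite plus_INR, !mult_INR, minus_INR in R by lia.
    exact R.
Qed.

(** * The main term *)

Lemma Rceil_spec x : x <= IZR (Rceil x) < x + 1.
Proof. unfold Rceil. rewrite minus_IZR. destruct (archimed (- x)). lra. Qed.

Lemma ln_pos x : 1 < x -> 0 < ln x.
Proof. intros Hx. rewrite <- ln_1. apply ln_increasing; lra. Qed.

Lemma Rpower_logq Q x : 1 < Q -> 0 < x -> Rpower Q (logq Q x) = x.
Proof.
  intros HQ Hx. pose proof (ln_pos Q HQ). unfold Rpower, logq.
  replace (ln x / ln Q * ln Q) with (ln x) by (field; lra). apply exp_ln, Hx.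
Qed.

Lemma Rpower_logq_shift Q x K a : 1 < Q -> 0 < x ->
  Rpower Q (logq Q x - INR K - a) = x / Q ^ K * Rpower Q (- a).
Proof.
  intros HQ Hx. rewrite !Rminus_def, !Rpower_plus, Rpower_Ropp, Rpower_pow, Rpower_logq by lra.
  reflexivity.
Qed.

Lemma kn_eq q n z : (1 <= kn q n z)%nat ->
  INR (kn q n z) = IZR (Rceil (logq (INR q) (INR n))) + IZR z.
Proof. unfold kn. intros H. rewrite INR_IZR_INZ, Z2Nat.id, plus_IZR; [reflexivity | lia]. Qed.

Lemma main_term_eq q n z m : (2 <= q)%nat -> 0 < INR n ->
  (1 <= kn q n z)%nat -> n = (kn q n z + 2 + m)%nat ->
  main_term q n z = (INR q - 1) ^ 2 * INR q ^ m * exp (- (decay_rate q (kn q n z) * INR n)).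
Proof.
  intros Hq Hn HK1 Hm. assert (HQ : 2 <= INR q) by (apply (le_INR 2); exact Hq).
  assert (HlQ : 0 < ln (INR q)) by (apply ln_pos; lra).
  pose proof (kn_eq q n z HK1) as HK. set (K := kn q n z) in *.
  assert (HQK : 0 < INR q ^ K) by (apply pow_lt; lra).
  assert (HD : Defs.Delta q n - IZR z = logq (INR q) (INR n) - INR K)
    by (unfold Defs.Delta; lra).
  unfold main_term. cbv zeta. rewrite HD, !Rpower_logq_shift by lra.
  rewrite (Rpower_Ropp (INR q) 1), Rpower_1 by lra. unfold Rpower.
  replace (logq (INR q) (exp 1)) with (/ ln (INR q)) by (unfold logq; rewrite ln_exp; field; lra).
  replace (- (/ ln (INR q) * (INR q - 1) * (INR n / INR q ^ K * / INR q)) * ln (INR q))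
    with (- (decay_rate q K * INR n)) by (unfold decay_rate; simpl; field; lra).
  rewrite Hm at 1. rewrite !pow_add. field. lra.
Qed.

Lemma card_ratio_eq q n z m : (2 <= q)%nat -> 0 < INR n -> (1 <= kn q n z)%nat ->
  n = (kn q n z + 2 + m)%nat ->
  INR (card_C1 n q (kn q n z)) / main_term q n z
  = INR (runfree (kn q n z) q m 0) / INR q ^ m * exp (decay_rate q (kn q n z) * INR n).
Proof.
  intros Hq Hn HK Hm. assert (HQ : 2 <= INR q) by (apply (le_INR 2); exact Hq).
  rewrite (main_term_eq q n z m) by assumption.
  rewrite Hm at 1. rewrite card_C1_eq, !mult_INR, minus_INR by lia. simpl INR.
  assert (0 < INR q ^ m) by (apply pow_lt; lra).
  rewrite exp_Ropp. pose proof (exp_pos (decay_rate q (kn q n z) * INR n)).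
  field. repeat split; lra.
Qed.

Definition decay_bound (q : nat) (z : Z) : R := (INR q - 1) / INR q * Rpower (INR q) (- IZR z).

Lemma decay_rate_mul_le q z n K : (2 <= q)%nat -> 0 < INR n ->
  logq (INR q) (INR n) + IZR z <= INR K -> decay_rate q K * INR n <= decay_bound q z.
Proof.
  intros Hq Hn HK. assert (HQ : 2 <= INR q) by (apply (le_INR 2); exact Hq).
  assert (HnK : INR n * Rpower (INR q) (IZR z) <= INR q ^ K).
  { rewrite <- Rpower_pow, <- (Rpower_logq (INR q) (INR n)), <- Rpower_plus by lra.
    apply Rle_Rpower; lra. }
  assert (Hz : 0 < Rpower (INR q) (IZR z)) by apply exp_pos.
  unfold decay_rate, decay_bound. rewrite Rpower_Ropp, <- tech_pow_Rmult.
  assert (0 < INR q ^ K) by (apply pow_lt; lra).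
  apply Rmult_le_reg_r with (INR q * INR q ^ K * Rpower (INR q) (IZR z)).
  - repeat apply Rmult_lt_0_compat; lra.
  - field_simplify; [|lra..]. nra.
Qed.

Lemma exp_correction_sandwich (eps c t n B w x : R) :
  0 < eps -> 0 <= c -> 0 <= t -> n = t + 2 * c + 2 -> eps * n <= B ->
  (2 * c + 1) * eps <= w -> w <= 1 / 2 ->
  (1 - 2 * eps) * exp (- (eps * (1 + 2 * ((2 * c + 1) * eps)) * t)) <= x <= exp (- (eps * t)) ->
  (1 - 2 * w) * exp (- (2 * B * w)) <= x * exp (eps * n) <= exp (2 * w).
Proof.
  intros He Hc Ht Hn HB Hs Hw [Hl Hu]. set (s := (2 * c + 1) * eps) in *.
  assert (Hes : eps <= s) by (unfold s; nra).
  assert (Hen : 0 < exp (eps * n)) by apply exp_pos.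
  split.
  - eapply Rle_trans; [|apply Rmult_le_compat_r; [lra | exact Hl]].
    rewrite (Rmult_assoc (1 - 2 * eps)), <- exp_plus. apply Rmult_le_compat; [lra | left; apply exp_pos | lra |].
    apply exp_le_compat.
    assert (eps * t <= B) by nra. assert (s * (eps * t) <= w * B) by (apply Rmult_le_compat; nra).
    nra.
  - eapply Rle_trans; [apply Rmult_le_compat_r; [lra | exact Hu]|].
    rewrite <- exp_plus. apply exp_le_compat. subst n. unfold s in Hs. nra.
Qed.

Definition rel_error (q : nat) (z : Z) (n : nat) : R :=
  decay_bound q z * ((2 * logq (INR q) (INR n) + 4 + 2 * Rabs (IZR z)) / INR n).

Lemma kn_bounds q n z : 1 + Rabs (IZR z) <= logq (INR q) (INR n) ->
  (1 <= kn q n z)%nat /\ logq (INR q) (INR n) + IZR z <= INR (kn q n z) /\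
  INR (kn q n z) < logq (INR q) (INR n) + 1 + Rabs (IZR z).
Proof.
  intros HL. set (L := logq (INR q) (INR n)) in *.
  destruct (Rceil_spec L) as [Hc1 Hc2].
  pose proof (Rle_abs (IZR z)). pose proof (Rle_abs (- IZR z)). rewrite Rabs_Ropp in *.
  assert (Hcz : (1 <= Rceil L + z)%Z) by (apply le_IZR; rewrite plus_IZR; lra).
  assert (HK1 : (1 <= kn q n z)%nat) by (unfold kn; fold L; lia).
  pose proof (kn_eq q n z HK1) as HK. fold L in HK.
  repeat split; [exact HK1 | lra | lra].
Qed.

Lemma window_le_rel_error q z n K : (2 <= q)%nat -> 0 < INR n ->
  decay_rate q K * INR n <= decay_bound q z ->
  2 * INR K + 1 <= 2 * logq (INR q) (INR n) + 4 + 2 * Rabs (IZR z) ->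
  (2 * INR K + 1) * decay_rate q K <= rel_error q z n.
Proof.
  intros Hq Hn HB HK. unfold rel_error. pose proof (pos_INR K).
  set (a := 2 * logq (INR q) (INR n) + 4 + 2 * Rabs (IZR z)) in *.
  assert (HQ : 2 <= INR q) by (apply (le_INR 2); exact Hq).
  assert (0 <= decay_rate q K) by (apply Rlt_le, Rdiv_lt_0_compat; [lra | apply pow_lt; lra]).
  apply Rle_trans with (a * decay_rate q K); [apply Rmult_le_compat_r; lra|].
  replace (decay_bound q z * (a / INR n)) with (a * (decay_bound q z / INR n)) by (field; lra).
  apply Rmult_le_compat_l; [lra|].
  apply Rmult_le_reg_r with (INR n); [lra|]. unfold Rdiv. rewrite Rmult_assoc, Rinv_l; lra.
Qed.

Theorem card_ratio_bounds q z n : (2 <= q)%nat -> 0 < INR n ->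
  1 + Rabs (IZR z) <= logq (INR q) (INR n) ->
  2 * logq (INR q) (INR n) + 4 + 2 * Rabs (IZR z) <= INR n ->
  rel_error q z n <= 1 / 4 ->
  (1 - 2 * rel_error q z n) * exp (- (2 * decay_bound q z * rel_error q z n))
  <= INR (card_C1 n q (kn q n z)) / main_term q n z <= exp (2 * rel_error q z n).
Proof.
  intros Hq Hn HL HLn Hw. assert (HQ : 2 <= INR q) by (apply (le_INR 2); exact Hq).
  destruct (kn_bounds q n z HL) as (HK1 & HKl & HKu).
  assert (HnK : (2 * kn q n z + 2 <= n)%nat)
    by (apply INR_le; rewrite plus_INR, mult_INR; simpl; lra).
  set (t := (n - 2 * kn q n z - 2)%nat).
  assert (Ht : INR n = INR t + 2 * INR (kn q n z) + 2)
    by (unfold t; rewrite minus_INR, minus_INR, mult_INR by lia; simpl; ring).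
  assert (HB : decay_rate q (kn q n z) * INR n <= decay_bound q z)
    by (apply decay_rate_mul_le; assumption).
  assert (Heps : 0 < decay_rate q (kn q n z))
    by (apply Rdiv_lt_0_compat; [lra | apply pow_lt; lra]).
  assert (Hs : (2 * INR (kn q n z) + 1) * decay_rate q (kn q n z) <= rel_error q z n)
    by (apply window_le_rel_error; [exact Hq | exact Hn | exact HB | lra]).
  rewrite (card_ratio_eq q n z (kn q n z + t)) by (auto; lia).
  apply (exp_correction_sandwich _ (INR (kn q n z)) (INR t)); auto using pos_INR; try lra.
  apply runfree_exp_bounds; auto. lra.
Qed.

(** * Passing to the limit *)

Lemma is_lim_seq_ln_INR : is_lim_seq (fun n => ln (INR n)) p_infty.
Proof.
  apply (is_lim_comp_seq ln INR p_infty p_infty is_lim_ln_p);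
    [exists 0%nat; discriminate | exact is_lim_seq_INR].
Qed.

Lemma is_lim_seq_ln_INR_div : is_lim_seq (fun n => ln (INR n) / INR n) 0.
Proof.
  apply (is_lim_comp_seq (fun y => ln y / y) INR p_infty 0 is_lim_div_ln_p);
    [exists 0%nat; discriminate | exact is_lim_seq_INR].
Qed.

Lemma is_lim_seq_inv_INR : is_lim_seq (fun n => / INR n) 0.
Proof.
  replace (Finite 0) with (Rbar_inv p_infty) by reflexivity.
  apply is_lim_seq_inv; [exact is_lim_seq_INR | discriminate].
Qed.

Lemma is_lim_seq_logq (Q : R) : 1 < Q -> is_lim_seq (fun n => logq Q (INR n)) p_infty.
Proof.
  intros HQ. pose proof (ln_pos Q HQ).
  unfold logq, Rdiv. apply (is_lim_seq_mult _ _ p_infty (/ ln Q)).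
  - exact is_lim_seq_ln_INR.
  - apply is_lim_seq_const.
  - apply is_Rbar_mult_p_infty_pos. simpl. apply Rinv_0_lt_compat, H.
Qed.

Lemma is_lim_seq_logq_affine_div (Q a : R) :
  is_lim_seq (fun n => (2 * logq Q (INR n) + a) / INR n) 0.
Proof.
  unfold logq.
  apply is_lim_seq_ext with (fun n => 2 / ln Q * (ln (INR n) / INR n) + a * / INR n).
  - intros n. unfold Rdiv. ring.
  - replace 0 with (2 / ln Q * 0 + a * 0) by ring.
    apply is_lim_seq_plus'; apply is_lim_seq_mult'; try apply is_lim_seq_const;
      [apply is_lim_seq_ln_INR_div | apply is_lim_seq_inv_INR].
Qed.

Lemma is_lim_seq_rel_error q z : is_lim_seq (rel_error q z) 0.
Proof.
  unfold rel_error. replace (Finite 0) with (Rbar_mult (decay_bound q z) 0)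
    by (simpl; f_equal; ring).
  apply is_lim_seq_scal_l.
  apply is_lim_seq_ext with (fun n => (2 * logq (INR q) (INR n) + (4 + 2 * Rabs (IZR z))) / INR n);
    [intros n; f_equal; ring | apply is_lim_seq_logq_affine_div].
Qed.

Lemma eventually_card_ratio_hyps q z : (2 <= q)%nat ->
  eventually (fun n => 0 < INR n /\ 1 + Rabs (IZR z) <= logq (INR q) (INR n) /\
    2 * logq (INR q) (INR n) + 4 + 2 * Rabs (IZR z) <= INR n /\ rel_error q z n <= 1 / 4).
Proof.
  intros Hq. assert (HQ : 2 <= INR q) by (apply (le_INR 2); exact Hq).
  assert (Hpos : eventually (fun n => 0 < INR n)) by (exists 1%nat; intros n Hn; apply lt_0_INR; lia).
  pose proof (proj2 (is_lim_seq_spec _ _) (is_lim_seq_logq (INR q) ltac:(lra)) (1 + Rabs (IZR z)))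
    as HL.
  pose proof (proj2 (is_lim_seq_spec _ _)
    (is_lim_seq_logq_affine_div (INR q) (4 + 2 * Rabs (IZR z))) (mkposreal 1 Rlt_0_1)) as Hn.
  pose proof (proj2 (is_lim_seq_spec _ _) (is_lim_seq_rel_error q z)
    (mkposreal (1 / 4) ltac:(lra))) as Hw.
  repeat apply filter_and; try assumption.
  - eapply filter_imp; [|exact HL]. intros n. lra.
  - eapply filter_imp; [|exact (filter_and _ _ Hpos Hn)]. simpl. intros n [Hn0 Hlt].
    rewrite Rminus_0_r in Hlt. apply Rabs_def2 in Hlt as [Hlt _].
    apply Rmult_lt_compat_r with (r := INR n) in Hlt; [|exact Hn0].
    unfold Rdiv in Hlt. rewrite Rmult_assoc, Rinv_l in Hlt; lra.
  - eapply filter_imp; [|exact Hw]. simpl. intros n Hlt.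
    rewrite Rminus_0_r in Hlt. apply Rabs_def2 in Hlt. lra.
Qed.

Theorem lemma6 (q : nat) (z : Z) (hq : (2 <= q)%nat) :
  Un_cv (fun n => INR (card_C1 n q (kn q n z)) / main_term q n z) 1.
Proof.
  apply is_lim_seq_Reals.
  pose proof (is_lim_seq_rel_error q z) as Hw.
  set (B := decay_bound q z).
  apply is_lim_seq_le_le_loc with
    (u := fun n => (1 - 2 * rel_error q z n) * exp (- (2 * B * rel_error q z n)))
    (w := fun n => exp (2 * rel_error q z n)).
  - eapply filter_imp; [|exact (eventually_card_ratio_hyps q z hq)].
    intros n (H1 & H2 & H3 & H4). apply card_ratio_bounds; assumption.
  - replace (Finite 1) with (Finite ((1 - 2 * 0) * exp (- (2 * B * 0))))
      by (f_equal; rewrite !Rmult_0_r, Ropp_0, exp_0; ring).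
    apply (is_lim_seq_continuous (fun x => (1 - 2 * x) * exp (- (2 * B * x)))); [reg | exact Hw].
  - replace (Finite 1) with (Finite (exp (2 * 0))) by (f_equal; rewrite Rmult_0_r, exp_0; ring).
    apply (is_lim_seq_continuous (fun x => exp (2 * x))); [reg | exact Hw].
Qed.
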